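(* Let $G$ be a group regarded as a large scale group whose bornology consists of all finite subsets of $G$. If $G$ has exactly two ends, then $G$ is finitely generated, and consequently $G$ contains an infinite cyclic subgroup of finite index.
   Context: For a group $G$ with the bornology of all finite subsets, the uniformly bounded covers are the covers refining $\{gF\}_{g\in G}$ for some finite $F\subseteq G$, and the bounded sets are the finite sets. For $A\subseteq G$ and a cover $\mathcal U$, $st(A,\mathcal U)$ is the union of members of $\mathcal U$ meeting $A$; $A$ is coarsely clopen if $st(A,\mathcal U)\cap st(G\setminus A,\mathcal U)$ is finite for every uniformly bounded $\mathcal U$. An end of $G$ is a family of infinite coarsely clopen subsets of $G$ maximal with respect to the property that all finite intersections of its members are infinite. *)

From HB Require Import structures.
From mathcomp Require Import all_boot all_order all_algebra.
From mathcomp Require Import boolp classical_sets cardinality.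
Set Implicit Arguments. Unset Strict Implicit. Unset Printing Implicit Defensive.
Local Open Scope classical_set_scope.

Record group := Group {
  carrier :> Type;
  gmul : carrier -> carrier -> carrier;
  gone : carrier;
  ginv : carrier -> carrier;
  gmulA : forall x y z, gmul x (gmul y z) = gmul (gmul x y) z;
  gmul1g : forall x, gmul gone x = x;
  gmulg1 : forall x, gmul x gone = x;
  gmulVg : forall x, gmul (ginv x) x = gone;
  gmulgV : forall x, gmul x (ginv x) = gone
}.

Section LargeScale.
Variable G : group.

Definition ltrans (g : G) (F : set G) : set G := [set gmul g f | f in F].

Definition is_cover (U : set (set G)) : Prop := \bigcup_(V in U) V = [set: G].

Definition unif_bounded (U : set (set G)) : Prop :=
  is_cover U /\
  exists F : set G, finite_set F /\ forall V, U V -> exists g : G, V `<=` ltrans g F.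

Definition star (A : set G) (U : set (set G)) : set G :=
  \bigcup_(V in [set V | U V /\ V `&` A !=set0]) V.

Definition coarsely_clopen (A : set G) : Prop :=
  forall U, unif_bounded U -> finite_set (star A U `&` star (~` A) U).

Definition end_candidate (E : set (set G)) : Prop :=
  (forall A, E A -> infinite_set A /\ coarsely_clopen A) /\
  (forall F : set (set G), F `<=` E -> finite_set F -> F !=set0 ->
     infinite_set (\bigcap_(A in F) A)).

Definition is_end (E : set (set G)) : Prop :=
  end_candidate E /\ forall E', end_candidate E' -> E `<=` E' -> E' = E.

Definition has_exactly_two_ends : Prop :=
  exists E1 E2, [/\ is_end E1, is_end E2, E1 <> E2 &
                   forall E, is_end E -> E = E1 \/ E = E2].

Inductive generated (S : set G) : G -> Prop :=
  | gen_base x : S x -> generated S x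
  | gen_one : generated S (gone G)
  | gen_mul x y : generated S x -> generated S y -> generated S (gmul x y)
  | gen_inv x : generated S x -> generated S (ginv x).

Definition finitely_generated : Prop :=
  exists S : set G, finite_set S /\ forall x, generated S x.

Definition zpow (g : G) (n : int) : G :=
  match n with
  | Posz k => iter k (gmul g) (gone G)
  | Negz k => iter k.+1 (gmul (ginv g)) (gone G)
  end.

Definition cyclic_subgroup (g : G) : set G := [set zpow g n | n in [set: int]].

Definition has_infinite_cyclic_finite_index : Prop :=
  exists g : G, infinite_set (cyclic_subgroup g) /\
    exists T : set G, finite_set T /\
      forall x : G, exists2 t, T t & exists2 y, cyclic_subgroup g y & x = gmul t y.

End LargeScale.

From mathcomp Require Import all_boot all_order all_algebra finmap zify.
From mathcomp Require Import boolp classical_sets cardinality.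
Set Implicit Arguments. Unset Strict Implicit. Unset Printing Implicit Defensive.
Local Open Scope classical_set_scope.

(* 1. For the finite-subset bornology, A is coarsely clopen iff for every t   *)
(*    the t-boundary {x in A | x t \notin A} is finite; this notion is stable *)
(*    under left translation, Boolean operations and finite modifications.    *)
(* 2. By Zorn's lemma every infinite clopen set belongs to an end.  Hence two *)
(*    distinct ends yield an infinite, co-infinite clopen set A, and as there *)
(*    are no further ends, every clopen set almost contains or almost misses  *)
(*    A, and likewise ~A: A "separates the two ends".                         *)
(* 3. For such A, every translate gA is almost A or almost ~A; the g of the   *)
(*    first kind form a subgroup H of index at most 2, which is infinite.     *)
(* 4. If G is generated by a finite S, choose among the sets almost equal to  *)
(*    A one, X, with fewest boundary edges in the Cayley graph of S.  A       *)
(*    connectivity argument gives h in H with hX strictly inside X; then      *)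
(*    G = U_(a,b) h^-a h^b (X \ hX) with X \ hX finite, so <h> is infinite    *)
(*    and of finite index.                                                    *)
(* 5. If G is not finitely generated, every finitely generated subgroup of H  *)
(*    is finite, otherwise the boundary of A would generate G.  A strictly    *)
(*    increasing chain of such finite subgroups cuts A (or ~A) into nonempty  *)
(*    "layers"; the union of the layers of index 2 or 3 mod 4 is clopen and   *)
(*    splits A into two infinite pieces, contradicting step 2.                *)

Local Notation "x \* y" := (gmul x y) (at level 40, left associativity).
Local Notation "x ^-1" := (ginv x).
Local Notation "\1" := (gone _).

Section GroupLaws.
Variable G : group.
Implicit Types x y z : G.

Lemma gmulKg x y : x^-1 \* (x \* y) = y.
Proof. by rewrite gmulA gmulVg gmul1g. Qed.

Lemma gmulKVg x y : x \* (x^-1 \* y) = y.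
Proof. by rewrite gmulA gmulgV gmul1g. Qed.

Lemma gmulgK x y : y \* x \* x^-1 = y.
Proof. by rewrite -gmulA gmulgV gmulg1. Qed.

Lemma gmulgKV x y : y \* x^-1 \* x = y.
Proof. by rewrite -gmulA gmulVg gmulg1. Qed.

Lemma gmulI x y z : x \* y = x \* z -> y = z.
Proof. by move=> e; rewrite -(gmulKg x y) e gmulKg. Qed.

Lemma ginvK x : x^-1^-1 = x.
Proof. by apply: (@gmulI x^-1); rewrite gmulgV gmulVg. Qed.

Lemma ginvM x y : (x \* y)^-1 = y^-1 \* x^-1.
Proof. by apply: (@gmulI (x \* y)); rewrite gmulgV -gmulA (gmulA y) gmulgV gmul1g gmulgV. Qed.

Lemma ginv1 : (\1 : G)^-1 = \1.
Proof. by rewrite -{2}(gmulVg \1) gmulg1. Qed.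

End GroupLaws.

Lemma finite_cover (T : Type) (A B C : set T) :
  finite_set B -> finite_set C -> A `<=` B `|` C -> finite_set A.
Proof. by move=> fB fC /sub_finite_set; apply; rewrite finite_setU. Qed.

Section Clopen.
Variable G : group.
Implicit Types (A B C : set G) (g t : G).

(* Points of A that leave A when multiplied by t on the right: the edges of
   the Cayley graph labelled t that go out of A. *)
Definition boundary t A : set G := [set x | A x /\ ~ A (x \* t)].

Definition clopen A := forall t, finite_set (boundary t A).

Definition almost_eq A B := finite_set (A `\` B) /\ finite_set (B `\` A).

Definition lmul g A : set G := [set x | A (g^-1 \* x)].
Definition rmul A (s : G) : set G := [set x | A (x \* s)].

Lemma almost_eq_refl A : almost_eq A A.
Proof. by split; apply: (sub_finite_set _ (@finite_set0 G)) => x []. Qed.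

Lemma almost_eq_sym A B : almost_eq A B -> almost_eq B A.
Proof. by case. Qed.

Lemma almost_eq_trans A B C : almost_eq A B -> almost_eq B C -> almost_eq A C.
Proof.
move=> [fAB fBA] [fBC fCB]; split.
  apply: (finite_cover fAB fBC) => x [Ax nCx].
  by have [Bx|nBx] := pselect (B x); [right|left].
apply: (finite_cover fCB fBA) => x [Cx nAx].
by have [Bx|nBx] := pselect (B x); [right|left].
Qed.

Lemma almost_eqC A B : almost_eq A B -> almost_eq (~` A) (~` B).
Proof.
by move=> [fAB fBA]; split; [apply: (sub_finite_set _ fBA)|apply: (sub_finite_set _ fAB)];
  move=> x [/= nX nnY]; split => //; apply: contra_notP nnY.
Qed.

Lemma almost_eq_infinite A B : almost_eq A B -> infinite_set A -> infinite_set B.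
Proof.
move=> [fAB _] iA fB; apply: iA; apply: (finite_cover fAB fB) => x Ax.
by have [Bx|nBx] := pselect (B x); [right|left].
Qed.

Lemma almost_eq_finite A B : almost_eq A B -> finite_set A -> finite_set B.
Proof.
move=> [_ fBA] fA; apply: (finite_cover fBA fA) => x Bx.
by have [Ax|nAx] := pselect (A x); [right|left].
Qed.

Lemma lmulK g A : lmul g^-1 (lmul g A) = A.
Proof. by apply/seteqP; split=> x; rewrite /lmul /= ginvK gmulKg. Qed.

Lemma lmulM g h A : lmul (g \* h) A = lmul g (lmul h A).
Proof. by apply/seteqP; split=> x; rewrite /lmul /= ginvM gmulA. Qed.

Lemma lmul1 A : lmul \1 A = A.
Proof. by apply/seteqP; split=> x; rewrite /lmul /= ginv1 gmul1g. Qed.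

Lemma lmulC g A : lmul g (~` A) = ~` lmul g A.
Proof. by []. Qed.

Lemma lmul_image g A : lmul g A = [set g \* x | x in A].
Proof.
apply/seteqP; split=> x; rewrite /lmul /=.
  by move=> Ax; exists (g^-1 \* x) => //; rewrite gmulKVg.
by move=> [y Ay <-]; rewrite gmulKg.
Qed.

Lemma lmul_finite g A : finite_set A -> finite_set (lmul g A).
Proof. by rewrite lmul_image; apply: finite_image. Qed.

Lemma lmul_infinite g A : infinite_set A -> infinite_set (lmul g A).
Proof. by move=> iA /(lmul_finite g^-1); rewrite lmulK. Qed.

Lemma lmul_almost_eq g A B : almost_eq A B -> almost_eq (lmul g A) (lmul g B).
Proof.
by move=> [fAB fBA]; split; [exact: (lmul_finite g fAB)|exact: (lmul_finite g fBA)].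
Qed.

Lemma clopenC A : clopen A -> clopen (~` A).
Proof.
move=> cA t; apply: (sub_finite_set _ (finite_image (fun y => y \* t^-1) (cA t^-1))).
move=> x [/= nAx nnAxt]; exists (x \* t); last by rewrite gmulgK.
by split; [apply: contra_notP nnAxt|rewrite gmulgK].
Qed.

Lemma clopenI A B : clopen A -> clopen B -> clopen (A `&` B).
Proof.
move=> cA cB t; apply: (finite_cover (cA t) (cB t)).
by move=> x [[Ax Bx] /not_andP [nA|nB]]; [left|right].
Qed.

Lemma clopenD A B : clopen A -> clopen B -> clopen (A `\` B).
Proof. by move=> cA cB; apply: clopenI => //; apply: clopenC. Qed.

Lemma clopen_almost_eq A B : almost_eq A B -> clopen A -> clopen B.
Proof.
move=> [fAB fBA] cA t.
have fR : finite_set ((B `\` A) `|` (fun y => y \* t^-1) @` (A `\` B)).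
  by rewrite finite_setU; split=> //; apply: finite_image.
apply: (finite_cover (cA t) fR) => x [Bx nBxt].
have [Ax|nAx] := pselect (A x); last by right; left.
have [Axt|nAxt] := pselect (A (x \* t)); last by left.
by right; right; exists (x \* t); [|rewrite gmulgK].
Qed.

Lemma clopen_lmul g A : clopen A -> clopen (lmul g A).
Proof.
move=> cA t; apply: (sub_finite_set _ (finite_image (gmul g) (cA t))).
move=> x [/= Ax nAxt]; exists (g^-1 \* x); last by rewrite gmulKVg.
by split=> //; rewrite -gmulA.
Qed.

Lemma rmul_almost_eq A s : clopen A -> almost_eq (rmul A s) A.
Proof.
move=> cA; split; last by apply: (sub_finite_set _ (cA s)) => x [/= Ax nAxs].
by apply: (sub_finite_set _ (clopenC cA s)) => x [/= Axs nAx]; split => // /(_ Axs).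
Qed.

(* For the bornology of finite sets, coarse clopenness only has to be tested
   on the covers by the translates of the pairs {1, t}. *)
Lemma coarsely_clopen_clopen A : coarsely_clopen A -> clopen A.
Proof.
move=> cc t; pose F := [set \1; t].
pose U := [set V | exists g, V = ltrans g F].
have F1 g : ltrans g F g by exists \1; [left|rewrite gmulg1].
have ubU : unif_bounded U.
  split; last by exists F; split; [exact: finite_set2|move=> V [g ->]; exists g].
  apply/seteqP; split=> // x _; exists (ltrans x F) => //; by exists x.
apply: (sub_finite_set _ (cc U ubU)) => x [Ax nAxt]; split.
  by exists (ltrans x F) => //; split; [exists x|exists x].
exists (ltrans x F) => //; split; first by exists x.
by exists (x \* t); split=> //; exists t; [right|].
Qed.

Lemma clopen_coarsely_clopen A : clopen A -> coarsely_clopen A.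
Proof.
move=> cA U [_ [F [fF subF]]].
pose D := [set f1^-1 \* f2 | f1 in F & f2 in F].
have fD : finite_set D by apply: finite_image2.
pose Bd := \bigcup_(u in D) (boundary u A `|` (fun y => y \* u) @` boundary u A).
have fBd : finite_set Bd.
  apply: bigcup_finite fD _ => u _.
  by rewrite finite_setU; split; [|apply: finite_image].
apply: (sub_finite_set _ fBd) => y [[V1 [UV1 [a [V1a Aa]]] V1y] [V2 [UV2 [b [V2b nAb]]] V2y]].
have [g1 s1] := subF _ UV1; have [g2 s2] := subF _ UV2.
have [f1 Ff1 ea] := s1 _ V1a; have [f2 Ff2 ey] := s1 _ V1y.
have [f3 Ff3 ey'] := s2 _ V2y; have [f4 Ff4 eb] := s2 _ V2b.
have [Ay|nAy] := pselect (A y).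
  exists (f3^-1 \* f4); first by exists f3 => //; exists f4.
  by left; split=> //; rewrite -ey' -gmulA gmulKVg eb.
exists (f1^-1 \* f2); first by exists f1 => //; exists f2.
right; exists a; last by rewrite -ea -gmulA gmulKVg ey.
by split=> //; rewrite -ea -gmulA gmulKVg ey.
Qed.

End Clopen.

Lemma chain_bound_seq (T : Type) (F : set (set T)) (s : seq {classic T}) :
  total_on F subset -> (forall y, y \in s -> exists2 E, F E & E y) ->
  s = [::] \/ exists2 E, F E & forall y, y \in s -> E y.
Proof.
move=> tot; elim: s => [|a s IH] sF; first by left.
right; have [Ea FEa Eaa] := sF a (mem_head _ _).
have [->|[Es FEs Ess]] := IH (fun y ys => sF y ltac:(by rewrite inE ys orbT)).
  by exists Ea => // y; rewrite inE => /eqP ->.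
have [sub|sub] := tot _ _ FEa FEs.
  by exists Es => // y; rewrite inE => /orP [/eqP ->|]; [exact: sub|exact: Ess].
by exists Ea => // y; rewrite inE => /orP [/eqP ->|ys] //; exact/sub/Ess.
Qed.

Section Ends.
Variable G : group.
Implicit Types (A C Y : set G) (E : set (set G)).

Lemma end_candidate_bigcup (F : set (set (set G))) : total_on F subset ->
  (forall E, F E -> end_candidate E) -> end_candidate (\bigcup_(E in F) E).
Proof.
move=> tot cand; split; first by move=> A [E FE EA]; apply: (cand E FE).1.
move=> Fam sub fFam neFam.
have [s es] := (@finite_seqP {classic (set G)} Fam).1 fFam.
case: (@chain_bound_seq _ F s tot).
- move=> Y Ys; have FamY : Fam Y by rewrite es.
  by have [E FE EY] := sub _ FamY; exists E.
- by move=> s0; case: neFam => Y; rewrite es s0.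
move=> [E FE sE]; apply: (cand E FE).2 => //.
by move=> Y; rewrite es /= => /sE.
Qed.

(* Every infinite clopen set belongs to some end (Zorn's lemma). *)
Lemma clopen_in_end Y : clopen Y -> infinite_set Y -> exists E, is_end E /\ E Y.
Proof.
move=> cY iY.
pose P := [set E | end_candidate E /\ (E = set0 \/ E Y)].
have candY : end_candidate [set Y].
  split; first by move=> A ->; split=> //; apply: clopen_coarsely_clopen.
  move=> Fam sub _ [Z FZ].
  have -> : Fam = [set Y] by apply/seteqP; split=> [X /sub //|X ->]; rewrite -(sub _ FZ).
  by rewrite bigcap_set1.
have chainP F : F `<=` P -> total_on F subset -> P (\bigcup_(X in F) X).
  move=> sub tot; split; first by apply: end_candidate_bigcup => // E /sub [].
  have [[E FE EY]|nEY] := pselect (exists2 E, F E & E Y); first by right; exists E.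
  left; apply/seteqP; split=> // A [E FE EA].
  have [_ [E0|EY]] := sub _ FE; first by rewrite E0 in EA.
  by case: nEY; exists E.
have [M [[cM M0Y] maxM]] := Zorn_bigcup chainP.
have MY : M Y.
  case: M0Y => // M0; exfalso; apply: (maxM [set Y]); last by split=> //; right.
  by rewrite M0; split=> [? []|/(_ Y erefl)].
exists M; split=> //; split=> // E' cE' ME'.
apply/seteqP; split=> //; apply: contrapT => nsub; apply: (maxM E'); first by split.
by split=> //; right; apply: ME'.
Qed.

Lemma end_setI_infinite E Y1 Y2 : is_end E -> E Y1 -> E Y2 ->
  infinite_set (Y1 `&` Y2).
Proof.
move=> [[_ fip] _] EY1 EY2; have := fip [set Y1; Y2].
rewrite bigcap_setU1 bigcap_set1; apply; last by exists Y1; left.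
- by move=> X [->|->].
- exact: finite_set2.
Qed.

Section AtMostTwoEnds.
Variables E1 E2 : set (set G).
Hypothesis only_ends : forall E, is_end E -> E = E1 \/ E = E2.

(* With at most two ends there are no three almost disjoint infinite clopen
   sets: they would lie in three pairwise distinct ends. *)
Lemma no_three_almost_disjoint Y1 Y2 Y3 :
  clopen Y1 -> clopen Y2 -> clopen Y3 ->
  infinite_set Y1 -> infinite_set Y2 -> infinite_set Y3 ->
  finite_set (Y1 `&` Y2) -> finite_set (Y1 `&` Y3) -> finite_set (Y2 `&` Y3) ->
  False.
Proof.
move=> c1 c2 c3 i1 i2 i3 f12 f13 f23.
have [F1 [eF1 F1Y]] := clopen_in_end c1 i1.
have [F2 [eF2 F2Y]] := clopen_in_end c2 i2.
have [F3 [eF3 F3Y]] := clopen_in_end c3 i3.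
have distinct (F F' : set (set G)) (X X' : set G) :
    is_end F -> F X -> F' X' -> finite_set (X `&` X') -> F <> F'.
  by move=> eF FX F'X' fXX' eFF'; subst F'; exact: (end_setI_infinite eF FX F'X' fXX').
have d12 := distinct _ _ _ _ eF1 F1Y F2Y f12.
have d13 := distinct _ _ _ _ eF1 F1Y F3Y f13.
have d23 := distinct _ _ _ _ eF2 F2Y F3Y f23.
by case: (only_ends eF1) => ?; case: (only_ends eF2) => ?; case: (only_ends eF3) => ?;
  congruence.
Qed.

Lemma clopen_dichotomy Y C : clopen Y -> infinite_set (~` Y) -> clopen C ->
  finite_set (C `&` Y) \/ finite_set (Y `\` C).
Proof.
move=> cY inY cC; have [f|nf] := pselect (finite_set (C `&` Y)); first by left.
right; apply: contrapT => nf2.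
apply: (no_three_almost_disjoint (clopenI cC cY) (clopenD cY cC) (clopenC cY) nf nf2 inY).
- by apply: (sub_finite_set _ (@finite_set0 G)) => x [[Cx _] [_ nCx]].
- by apply: (sub_finite_set _ (@finite_set0 G)) => x [[_ Yx] nYx].
- by apply: (sub_finite_set _ (@finite_set0 G)) => x [[Yx _] nYx].
Qed.

End AtMostTwoEnds.

(* Two distinct ends yield an infinite clopen set with infinite complement:
   a member Y of the first end that is not in the second one. *)
Lemma distinct_ends_split E1 E2 : is_end E1 -> is_end E2 -> E1 <> E2 ->
  exists Y, [/\ clopen Y, infinite_set Y & infinite_set (~` Y)].
Proof.
move=> e1 e2 ne.
have [Y [E1Y nE2Y]] : exists Y, E1 Y /\ ~ E2 Y.
  apply: contrapT => h; apply: ne; symmetry; apply: (e1.2 E2 e2.1).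
  by move=> Y E1Y; apply: contrapT => nY; apply: h; exists Y.
have [iY ccY] := e1.1.1 Y E1Y.
have ncand : ~ end_candidate (E2 `|` [set Y]).
  by move=> cand; apply: nE2Y; rewrite -(e2.2 _ cand); [right|move=> X; left].
have [Fam [sub fFam neFam fcap]] : exists Fam, [/\ Fam `<=` E2 `|` [set Y],
    finite_set Fam, Fam !=set0 & finite_set (\bigcap_(X in Fam) X)].
  apply: contrapT => h; apply: ncand; split; first by move=> X [/(e2.1.1 X)//|->].
  by move=> Fam sub fFam neFam fcap; apply: h; exists Fam.
have FamY : Fam Y.
  apply: contrapT => nFY; apply: (e2.1.2 Fam _ fFam neFam) => // X FX.
  by case: (sub _ FX) => // eX; case: nFY; rewrite -eX.
rewrite (bigcap_setD1 _ _ _ FamY) in fcap.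
have [neF'|eF'] := pselect (Fam `\ Y !=set0); last first.
  exfalso; apply: iY; apply: (sub_finite_set _ fcap) => x Yx; split=> // X [FX nXY].
  by case: eF'; exists X.
have iZ : infinite_set (\bigcap_(X in Fam `\ Y) X).
  apply: e2.1.2 => //; last exact: finite_setD.
  by move=> X [FX nXY]; case: (sub _ FX).
exists Y; split=> [|//|fnY]; first exact: coarsely_clopen_clopen.
apply: iZ; apply: (finite_cover fcap fnY) => x Zx.
by have [Yx|nYx] := pselect (Y x); [left|right].
Qed.

End Ends.

Section Separator.
Variable G : group.
Implicit Types (A B C Y : set G) (g h : G).

Definition decided Y C := finite_set (C `&` Y) \/ finite_set (Y `\` C).

Definition separator A := [/\ clopen A, infinite_set A, infinite_set (~` A) &
  forall C, clopen C -> decided A C /\ decided (~` A) C].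

Lemma two_ends_separator : has_exactly_two_ends G -> exists A, separator A.
Proof.
move=> [E1 [E2 [e1 e2 ne only]]].
have [Y [cY iY inY]] := distinct_ends_split e1 e2 ne.
exists Y; split=> // C cC; split; first exact: (clopen_dichotomy only cY inY cC).
by apply: (clopen_dichotomy only (clopenC cY)) => //; rewrite setCK.
Qed.

Lemma separatorC A : separator A -> separator (~` A).
Proof.
move=> [cA iA inA dA]; split; [exact: clopenC|by []|by rewrite setCK|].
by move=> C /dA [? ?]; rewrite setCK.
Qed.

Lemma separator_lmul A g : separator A ->
  almost_eq (lmul g A) A \/ almost_eq (lmul g A) (~` A).
Proof.
move=> [cA iA inA dA].
have iC := lmul_infinite (g := g) iA.
have inC : infinite_set (~` lmul g A) by rewrite -lmulC; apply: lmul_infinite.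
have [[f1|f2] [f3|f4]] := dA _ (clopen_lmul g cA).
- exfalso; apply: iC; apply: (finite_cover f1 f3) => x Cx.
  by have [Ax|nAx] := pselect (A x); [left|right].
- right; split=> //.
  by apply: (sub_finite_set _ f1) => x [Cx nnAx]; split=> //; apply: contrapT.
- by left; split.
- exfalso; apply: inC; apply: (finite_cover f2 f4) => x nCx.
  by have [Ax|nAx] := pselect (A x); [left|right].
Qed.

Definition stab A : set G := [set g | almost_eq (lmul g A) A].

Lemma stabC A : stab (~` A) = stab A.
Proof.
apply/seteqP; split=> g; rewrite /stab /= lmulC => h; last exact: almost_eqC.
by have := almost_eqC h; rewrite !setCK.
Qed.

Lemma stab1 A : stab A \1.
Proof. by rewrite /stab /= lmul1; apply: almost_eq_refl. Qed.

Lemma stabM A g h : stab A g -> stab A h -> stab A (g \* h).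
Proof.
by move=> Sg Sh; rewrite /stab /= lmulM; exact: almost_eq_trans (lmul_almost_eq g Sh) Sg.
Qed.

Lemma stabV A g : stab A g -> stab A g^-1.
Proof. by move=> Sg; have := lmul_almost_eq g^-1 Sg; rewrite lmulK => /almost_eq_sym. Qed.

Lemma stabVN A g : ~ stab A g -> ~ stab A g^-1.
Proof. by move=> Sg /stabV; rewrite ginvK. Qed.

Lemma stabMN A g h : stab A g -> ~ stab A h -> ~ stab A (g \* h).
Proof.
by move=> Sg Sh Sgh; apply: Sh; rewrite -(gmulKg g h); apply: stabM => //; apply: stabV.
Qed.

Lemma stabNM A g h : ~ stab A g -> stab A h -> ~ stab A (g \* h).
Proof.
by move=> Sg Sh Sgh; apply: Sg; rewrite -(gmulgK h g); apply: stabM => //; apply: stabV.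
Qed.

Lemma stab_lmul A g X : stab A g -> almost_eq X A -> almost_eq (lmul g X) A.
Proof. by move=> Sg XA; apply: almost_eq_trans (lmul_almost_eq g XA) Sg. Qed.

Section Stabilizer.
Variable A : set G.
Hypothesis sepA : separator A.

Lemma nstab_lmul g X : ~ stab A g -> almost_eq X A -> almost_eq (lmul g X) (~` A).
Proof.
move=> Sg XA; apply: almost_eq_trans (lmul_almost_eq g XA) _.
by case: (separator_lmul g sepA).
Qed.

(* The almost stabilizer of a separator has index at most 2. *)
Lemma stabMNN g h : ~ stab A g -> ~ stab A h -> stab A (g \* h).
Proof.
move=> Sg Sh; rewrite /stab /= lmulM.
apply: almost_eq_trans (lmul_almost_eq g (nstab_lmul Sh (almost_eq_refl A))) _.
by rewrite lmulC; have := almost_eqC (nstab_lmul Sg (almost_eq_refl A)); rewrite setCK.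
Qed.

Lemma group_infinite : infinite_set [set: G].
Proof. by case: sepA => _ iA _ _ f; apply: iA; apply: (sub_finite_set _ f). Qed.

(* A meets its almost stabilizer in an infinite set: otherwise A would be
   almost contained in the other coset H c, and so would its right translate
   A c^-1, which is almost A. *)
Lemma stab_setI_infinite : infinite_set (A `&` stab A).
Proof.
case: sepA => cA iA _ _ fAH.
have [allH|/existsNP [c nHc]] := pselect (forall g, stab A g).
  by apply: iA; apply: (sub_finite_set _ fAH) => x Ax; split.
have fAnH : infinite_set (A `&` ~` stab A).
  move=> f; apply: iA; apply: (finite_cover fAH f) => x Ax.
  by have [Hx|nHx] := pselect (stab A x); [left|right].
have fR : finite_set (rmul A c^-1 `&` stab A).
  apply: (finite_cover fAH (rmul_almost_eq c^-1 cA).1) => x [Ax Hx].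
  by have [Ax'|nAx'] := pselect (A x); [left|right].
apply: fAnH; apply: (sub_finite_set _ (finite_image (fun y => y \* c^-1) fR)).
move=> x [Ax nHx]; exists (x \* c); last by rewrite gmulgK.
by split; [rewrite /rmul /= gmulgK|apply: stabMNN].
Qed.

Lemma stab_infinite : infinite_set (stab A).
Proof. by move=> f; apply: stab_setI_infinite; apply: (sub_finite_set _ f) => x []. Qed.

(* The almost stabilizer is not almost equal to a clopen set with infinite
   complement: it would be clopen, and either everything, or, for c outside
   it, the c-boundary of the stabilizer would contain all of it. *)
Lemma stab_not_almost_clopen Y : clopen Y -> infinite_set (~` Y) ->
  almost_eq Y (stab A) -> False.
Proof.
move=> cY inY YH; have cH := clopen_almost_eq YH cY.
have [allH|/existsNP [c0 nHc0]] := pselect (forall g, stab A g).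
  by apply: inY; apply: (sub_finite_set _ YH.2) => x nYx; split.
apply: stab_infinite; apply: (sub_finite_set _ (cH c0)) => g Hg; split=> //.
exact: stabMN.
Qed.

End Stabilizer.
End Separator.

Section Generated.
Variable G : group.
Implicit Types (S T K : set G) (x y s : G).

Lemma generated_sub S T : S `<=` T -> forall x, generated S x -> generated T x.
Proof.
move=> ST x; elim=> [y Sy| |y z _ gy _ gz|y _ gy].
- by apply: gen_base; apply: ST.
- exact: gen_one.
- exact: gen_mul.
- exact: gen_inv.
Qed.

Lemma generated_min S K : K \1 -> (forall x y, K x -> K y -> K (x \* y)) ->
  (forall x, K x -> K x^-1) -> S `<=` K -> forall x, generated S x -> K x.
Proof.
move=> K1 KM KV SK x; elim=> [y Sy| |y z _ Ky _ Kz|y _ Ky].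
- exact: SK.
- exact: K1.
- exact: KM.
- exact: KV.
Qed.

Definition symm S : set G := S `|` (fun s => s^-1) @` S.

Lemma symm_finite S : finite_set S -> finite_set (symm S).
Proof. by move=> fS; rewrite finite_setU; split=> //; apply: finite_image. Qed.

Lemma symmV S s : symm S s -> symm S s^-1.
Proof. by case=> [Ss|[t St <-]]; [right; exists s|left; rewrite ginvK]. Qed.

Lemma generated_mul_symm S x s : generated S x -> symm S s -> generated S (x \* s).
Proof.
move=> gx [Ss|[t St <-]]; apply: gen_mul => //; first exact: gen_base.
by apply: gen_inv; apply: gen_base.
Qed.

Lemma symm_closed_generated S K : (forall x s, K x -> symm S s -> K (x \* s)) ->
  forall w, generated S w -> forall x, K x -> K (x \* w) /\ K (x \* w^-1).
Proof.
move=> cl w; elim=> [s Ss| |a b _ ha _ hb|a _ ha] x Kx.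
- by split; apply: cl => //; [left|right; exists s].
- by rewrite ginv1 gmulg1.
- rewrite ginvM !gmulA; split; first by apply: (hb _ (ha _ Kx).1).1.
  by apply: (ha _ (hb _ Kx).2).2.
- by rewrite ginvK; have [h1 h2] := ha _ Kx.
Qed.

Lemma boundaryM a b K :
  boundary (a \* b) K `<=` boundary a K `|` (fun y => y \* a^-1) @` boundary b K.
Proof.
move=> x [Kx nK]; have [Kxa|nKxa] := pselect (K (x \* a)); last by left.
by right; exists (x \* a); [split=> //; rewrite -gmulA|rewrite gmulgK].
Qed.

End Generated.

Section CayleyGraph.
Variable G : group.
Implicit Types (K X Y : set G) (g x y s : G).
Variable S : set G.
Hypothesis fS : finite_set S.
Hypothesis genS : forall x, generated S x.

Lemma symm_closed_all K x0 : (forall x s, K x -> symm S s -> K (x \* s)) -> K x0 ->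
  forall y, K y.
Proof.
move=> cl Kx0 y; have := (symm_closed_generated cl (genS (x0^-1 \* y)) Kx0).1.
by rewrite gmulKVg.
Qed.

Lemma boundary_edge K x0 y0 : K x0 -> ~ K y0 ->
  exists x s, [/\ K x, symm S s & ~ K (x \* s)].
Proof.
move=> Kx0 nKy0; apply: contrapT => h; apply: nKy0; apply: (symm_closed_all (x0 := x0)) => //.
by move=> x s Kx Ss; apply: contrapT => nK; apply: h; exists x, s.
Qed.

Lemma clopen_generators K : (forall s, symm S s -> finite_set (boundary s K)) -> clopen K.
Proof.
move=> h t; suff : finite_set (boundary t K) /\ finite_set (boundary t^-1 K) by case.
have fM a b : finite_set (boundary a K) -> finite_set (boundary b K) ->
    finite_set (boundary (a \* b) K).
  move=> fa fb; apply: (sub_finite_set (@boundaryM _ a b K)).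
  by rewrite finite_setU; split=> //; apply: finite_image.
elim: (genS t) => [s Ss| |a b _ [ha ha'] _ [hb hb']|a _ [ha ha']].
- by split; apply: h; [left|right; exists s].
- rewrite ginv1; suff -> : boundary \1 K = set0 by split; apply: finite_set0.
  by apply/seteqP; split=> // x [Kx]; rewrite gmulg1.
- by rewrite ginvM; split; apply: fM.
- by rewrite ginvK.
Qed.

Definition separates Y x y := (Y x /\ ~ Y y) \/ (~ Y x /\ Y y).

Lemma separates_split Y x y z : separates Y x z -> separates Y x y \/ separates Y y z.
Proof. by have [Yy|nYy] := pselect (Y y); rewrite /separates; tauto. Qed.

Lemma separates_sym Y x y : separates Y x y -> separates Y y x.
Proof. by rewrite /separates; tauto. Qed.

Definition crossing Y : set G :=
  [set p | exists2 s, symm S s & separates Y p (p \* s)].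

Lemma crossing_finite Y : clopen Y -> finite_set (crossing Y).
Proof.
move=> cY; pose F s := boundary s Y `|` boundary s (~` Y).
apply: (sub_finite_set _ (bigcup_finite (F := F) (symm_finite fS) _)).
  by move=> p [s Ss [h|[h1 h2]]]; exists s => //; [left|right; split].
by move=> s _; rewrite finite_setU; split; [exact: cY|exact: clopenC].
Qed.

Lemma crossing_lmul g Y : crossing (lmul g Y) = lmul g (crossing Y).
Proof.
by apply/seteqP; split=> p [s Ss h]; exists s => //;
  move: h; rewrite /separates /lmul /= gmulA.
Qed.

Definition cut Y : set (G * G) :=
  [set e | [/\ Y e.1, ~ Y e.2 & exists2 s, symm S s & e.2 = e.1 \* s]].

Lemma cut_finite Y : clopen Y -> finite_set (cut Y).
Proof.
move=> cY; pose F s := (fun x => (x, x \* s)) @` boundary s Y.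
apply: (sub_finite_set _ (bigcup_finite (F := F) (symm_finite fS) _)).
  move=> [x y] [/= Yx nYy [s Ss ey]]; exists s => //.
  by exists x; [split=> //; rewrite -ey|rewrite ey].
by move=> s _; apply: finite_image.
Qed.

Definition cut_size Y : nat := #|` fset_set (cut Y : set {classic (G * G)}) |%fset.

Lemma cut_size_lt Y Z : clopen Z -> cut Y `<=` cut Z -> cut Z `\` cut Y !=set0 ->
  (cut_size Y < cut_size Z)%N.
Proof.
move=> cZ sub [e [Ze nYe]].
have fZ := cut_finite cZ.
have fY : finite_set (cut Y) by apply: sub_finite_set fZ.
rewrite /cut_size; apply: fproper_ltn_card; rewrite fproperEneq.
apply/andP; split; last by rewrite -(@fset_set_sub {classic (G * G)}).
apply/eqP => eq; apply: nYe.
have : (e : {classic (G * G)}) \in fset_set (cut Z : set {classic (G * G)}).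
  by rewrite in_fset_set // inE.
by rewrite -eq in_fset_set // inE.
Qed.

End CayleyGraph.

Section MinimalCut.
Variable G : group.
Implicit Types (K Y : set G) (x y s : G).
Variables (A S : set G).
Hypothesis sepA : separator A.
Hypothesis fS : finite_set S.
Hypothesis genS : forall x, generated S x.

Lemma min_cut_exists : exists X, almost_eq X A /\
  forall Y, almost_eq Y A -> (cut_size S X <= cut_size S Y)%N.
Proof.
pose P n := `[< exists Y, almost_eq Y A /\ cut_size S Y = n >].
have exP : exists n, P n.
  by exists (cut_size S A); apply/asboolP; exists A; split=> //; apply: almost_eq_refl.
case: (ex_minnP exP) => m /asboolP [X [XA eX]] minm.
by exists X; split=> // Y YA; rewrite eX; apply: minm; apply/asboolP; exists Y.
Qed.

Section MinimalSet.
Variable X : set G.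
Hypothesis XA : almost_eq X A.
Hypothesis Xmin : forall Y, almost_eq Y A -> (cut_size S X <= cut_size S Y)%N.

Let cX : clopen X.
Proof. by case: sepA => cA _ _ _; exact: clopen_almost_eq (almost_eq_sym XA) cA. Qed.

Definition outside_closed K :=
  K `<=` ~` X /\ forall x s, K x -> symm S s -> ~ X (x \* s) -> K (x \* s).

(* Its boundary edges all end in the clopen set X. *)
Lemma outside_closed_clopen K : outside_closed K -> clopen K.
Proof.
move=> [subK clK]; apply: (clopen_generators genS) => s Ss.
apply: (sub_finite_set _ (clopenC cX s)) => x [Kx nKxs]; split; first exact: subK.
by move=> nXxs; apply: nKxs; apply: clK.
Qed.

(* A nonempty finite outside-closed K could be added to X, removing the edges
   from K to X from the minimal cut. *)
Lemma no_finite_outside_closed K : outside_closed K -> finite_set K -> K !=set0 -> False.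
Proof.
move=> [subK clK] fK [k0 Kk0].
have XKA : almost_eq (X `|` K) A.
  case: XA => fXA fAX; split.
    by apply: (finite_cover fXA fK) => x [[Xx|Kx] nAx]; [left|right].
  by apply: (sub_finite_set _ fAX) => x [Ax nXKx]; split=> // Xx; apply: nXKx; left.
have := Xmin XKA; apply/negP; rewrite -ltnNge; apply: cut_size_lt => //.
  move=> [x y] [/= XKx nXKy [s Ss ey]]; case: XKx => [Xx|Kx].
    by split=> //; [move=> Xy; apply: nXKy; left|exists s].
  exfalso; apply: (nXKy); right; rewrite ey; apply: clK => //.
  by move=> Xxs; apply: nXKy; left; rewrite ey.
have [y0 nKy0] : exists y, ~ K y.
  apply: contrapT => /forallNP all; apply: (group_infinite sepA).
  by apply: (sub_finite_set _ fK) => y _; apply: contrapT; apply: all.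
have [p [s [Kp Ss nKps]]] := boundary_edge genS Kk0 nKy0.
have Xps : X (p \* s) by apply: contrapT => nX; apply: nKps; apply: clK.
exists (p \* s, p); split.
  by split=> //=; [exact: subK|exists s^-1; [apply: symmV|rewrite gmulgK]].
by move=> [_ /= nXK _]; apply: nXK; right.
Qed.

Lemma outside_clopen_dichotomy K : K `<=` ~` X -> clopen K ->
  finite_set K \/ finite_set (~` A `\` K).
Proof.
case: sepA => _ iA _ dA subK cK; have [[f1|f2] [f3|f4]] := dA _ cK.
- left; apply: (finite_cover f1 f3) => x Kx.
  by have [Ax|nAx] := pselect (A x); [left|right].
- by right.
- exfalso; apply: iA; apply: (finite_cover f2 XA.2) => x Ax.
  have [Kx|nKx] := pselect (K x); last by left.
  by right; split=> //; apply: subK.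
- by right.
Qed.

(* The complement of X is connected: an outside-closed set is empty or
   contains all of ~X. *)
Lemma outside_connected K : outside_closed K ->
  (forall y, ~ K y) \/ (forall y, ~ X y -> K y).
Proof.
move=> oK; apply: contrapT => /not_orP [/not_existsP [k Kk] /existsNP [k' nk']].
have [nXk' nKk'] : ~ X k' /\ ~ K k' by split=> // nK; apply: nk'.
pose K' := ~` X `\` K.
have oK' : outside_closed K'.
  split=> [x []//|x s [nXx nKx] Ss nXxs]; split=> // Kxs; apply: nKx.
  by have := oK.2 _ s^-1 Kxs (symmV Ss); rewrite gmulgK; apply.
have [fK|fK1] := outside_clopen_dichotomy oK.1 (outside_closed_clopen oK).
  by apply: (no_finite_outside_closed oK fK); exists k.
have [fK'|fK2] := outside_clopen_dichotomy oK'.1 (outside_closed_clopen oK').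
  by apply: (no_finite_outside_closed oK' fK'); exists k'.
case: sepA => _ _ inA _; apply: inA; apply: (finite_cover fK1 fK2) => x nAx.
by have [Kx|nKx] := pselect (K x); [right; split=> // -[]|left].
Qed.

End MinimalSet.
End MinimalCut.

Section StrictTranslate.
Variable G : group.
Implicit Types (K Y : set G) (g h x : G).
Variables (A S X : set G).
Hypothesis sepA : separator A.
Hypothesis fS : finite_set S.
Hypothesis genS : forall x, generated S x.
Hypothesis XA : almost_eq X A.

Let cX : clopen X.
Proof. by case: sepA => cA _ _ _; exact: clopen_almost_eq (almost_eq_sym XA) cA. Qed.

(* Some h in the almost stabilizer pushes the finitely many crossing points
   of X into X, and none of them onto another crossing point: almost every
   element of A qualifies, and A meets the almost stabilizer infinitely. *)
Lemma good_translation : exists h, [/\ stab A h,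
  forall q, crossing S X q -> X (h \* q) &
  forall q, crossing S X q -> ~ crossing S X (h \* q)].
Proof.
have fQ := crossing_finite fS cX.
pose Y := [set g | forall q, crossing S X q -> X (g \* q)].
have fAY : finite_set (A `\` Y).
  have fB : finite_set (\bigcup_(q in crossing S X) boundary q X).
    by apply: bigcup_finite fQ (fun q _ => cX q).
  apply: (finite_cover XA.2 fB) => g [Ag nYg].
  have [Xg|nXg] := pselect (X g); last by left.
  right; apply: contrapT => nB; apply: nYg => q Qq.
  by apply: contrapT => nXgq; apply: nB; exists q.
pose Bad := [set a \* b^-1 | a in crossing S X & b in crossing S X].
have fBad : finite_set Bad by apply: finite_image2.
have iZ : infinite_set ((A `&` stab A) `\` ((A `\` Y) `|` Bad)).
  by apply: infinite_setD; [apply: stab_setI_infinite|rewrite finite_setU].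
have [h [[Ah Hh] nh]] := infinite_setN0 iZ.
exists h; split=> // q Qq.
  by apply: contrapT => nXhq; apply: nh; left; split=> // /(_ q Qq).
by move=> Qhq; apply: nh; right; exists (h \* q) => //; exists q => //; rewrite gmulgK.
Qed.

Hypothesis Xmin : forall Y, almost_eq Y A -> (cut_size S X <= cut_size S Y)%N.

(* For such an h and a cut-minimal X, hX lies strictly inside X: the part of
   hX outside X is outside-closed, hence empty, as it cannot be all of ~X. *)
Lemma translate_inside h : stab A h ->
  (forall q, crossing S X q -> X (h \* q)) ->
  (forall q, crossing S X q -> ~ crossing S X (h \* q)) ->
  lmul h X `<=` X /\ X `\` lmul h X !=set0.
Proof.
move=> Hh QX Qout.
have [cA iA inA _] := sepA.
pose K := ~` X `&` lmul h X.
have oK : outside_closed S X K.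
  split=> [x []//|x s [nXx hXx] Ss nXxs]; split=> //.
  apply: contrapT => nhxs; apply: nXx.
  have : crossing S (lmul h X) x by exists s => //; left.
  by rewrite crossing_lmul /lmul /= => /QX; rewrite gmulKVg.
have [K0|Kall] := outside_connected sepA fS genS XA Xmin oK; last first.
  exfalso; apply: inA; apply: (finite_cover XA.1 (stab_lmul Hh XA).1) => x nAx.
  have [Xx|nXx] := pselect (X x); first by left; split.
  by right; split=> //; apply: (Kall x nXx).2.
have hXX : lmul h X `<=` X by move=> x hXx; apply: contrapT => nXx; apply: (K0 x).
split=> //; apply: contrapT => /forallNP nd.
have eq : lmul h X = X.
  by apply/seteqP; split=> // x Xx; apply: contrapT => nhx; apply: (nd x).
have [x0 Xx0] := infinite_setN0 (almost_eq_infinite (almost_eq_sym XA) iA).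
have [y0 nXy0] := infinite_setN0 (almost_eq_infinite (almost_eqC (almost_eq_sym XA)) inA).
have [q0 [s0 [Xq0 Ss0 nXq0s0]]] := boundary_edge genS Xx0 nXy0.
have Qq0 : crossing S X q0 by exists s0 => //; left.
apply: (Qout q0 Qq0); rewrite -{1}eq crossing_lmul /lmul /= gmulKg //.
Qed.

End StrictTranslate.

Lemma injective_not_finite (T : Type) (f : nat -> T) (W : set T) : injective f ->
  finite_set W -> ~ (forall n, W (f n)).
Proof.
move=> inj fW all; apply: infinite_nat.
have : finite_set (f @^-1` W) by apply: finite_preimage => // x y _ _; apply: inj.
by apply: sub_finite_set => n _; apply: all.
Qed.

Section Powers.
Variables (G : group) (h : G).

Definition gpow n : G := iter n (gmul h) \1.

Lemma gpow_comm n : gpow n \* h = h \* gpow n.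
Proof. by elim: n => [|n IH]; [rewrite /= gmul1g gmulg1|rewrite /= -gmulA -IH]. Qed.

Lemma gpowD m n : gpow (m + n) = gpow m \* gpow n.
Proof. by elim: m => [|m IH]; [rewrite add0n /= gmul1g|rewrite addSn /= IH gmulA]. Qed.

Lemma iter_ginv n : iter n (gmul h^-1) \1 = (gpow n)^-1.
Proof.
elim: n => [|n IH]; first by rewrite ginv1.
by rewrite iterS IH /= ginvM -ginvM -ginvM gpow_comm.
Qed.

Lemma gpow_cyclic a b : cyclic_subgroup h ((gpow a)^-1 \* gpow b).
Proof.
have [ab|ba] := leqP a b.
  by exists (Posz (b - a)) => //=; rewrite -{2}(subnKC ab) gpowD gmulKg.
exists (Negz (a - b).-1) => //=.
have e : a = b + (a - b).-1.+1 by rewrite prednK ?subn_gt0 // subnKC // ltnW.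
rewrite -/(iter (a - b).-1.+1 (gmul h^-1) \1) iter_ginv e gpowD ginvM -gmulA gmulVg.
by rewrite gmulg1 addKn.
Qed.

End Powers.

Section Decomposition.
Variable G : group.
Implicit Types (Y : set G) (x y : G).
Variable S : set G.

Lemma crossing_on_path w : generated S w -> forall y, exists W : set G, finite_set W /\
  forall Y, separates Y y (y \* w) -> exists2 p, W p & crossing S Y p.
Proof.
elim=> [s Ss| |a b _ IHa _ IHb|a _ IHa] y.
- by exists [set y]; split=> // Y sep; exists y => //; exists s => //; left.
- exists set0; split=> [|Y]; first exact: finite_set0.
  by rewrite gmulg1 => -[[]|[]].
- have [W1 [f1 h1]] := IHa y; have [W2 [f2 h2]] := IHb (y \* a).
  exists (W1 `|` W2); split=> [|Y]; first by rewrite finite_setU.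
  rewrite gmulA => /(separates_split (y \* a)) [/h1|/h2] [p Wp Qp].
    by exists p => //; left.
  by exists p => //; right.
- have [W [fW hW]] := IHa (y \* a^-1).
  by exists W; split=> // Y /separates_sym sep; apply: hW; rewrite gmulgKV.
Qed.

Hypothesis fS : finite_set S.
Hypothesis genS : forall x, generated S x.
Variables (A X : set G) (h : G).
Hypothesis sepA : separator A.
Hypotheses (XA : almost_eq X A) (cX : clopen X).
Hypotheses (hXX : lmul h X `<=` X) (hX_proper : X `\` lmul h X !=set0).

Let Xn n := lmul (gpow h n) X.

Lemma Xn_decr m n : (m <= n)%N -> Xn n `<=` Xn m.
Proof.
elim: n => [|n IH]; first by rewrite leqn0 => /eqP ->.
rewrite leq_eqVlt => /orP [/eqP ->//|/IH sub] x.
by rewrite /Xn /= -gpow_comm lmulM => /hXX /sub.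
Qed.

Lemma Xn_sub n : Xn n `<=` X.
Proof. by move=> x /(Xn_decr (leq0n n)); rewrite /Xn /= lmul1. Qed.

(* As hX misses a point of X, the powers of h are pairwise distinct. *)
Lemma gpow_inj : injective (gpow h).
Proof.
have [d [Xd nd]] := hX_proper.
have key n m : (n < m)%N -> gpow h n <> gpow h m.
  move=> lt e; have : Xn m (gpow h n \* d) by rewrite /Xn -e /lmul /= gmulKg.
  by move/(Xn_decr lt); rewrite /Xn /= -gpow_comm lmulM /lmul /= gmulKg.
move=> n m e; apply/eqP; apply: contraT; rewrite neq_ltn => /orP [lt|lt].
  by case: (key _ _ lt e).
by case: (key _ _ lt (esym e)).
Qed.

(* A path from y to a point outside X crosses every h^n X at one of finitely
   many points, so infinitely many distinct h^n would move a crossing point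
   of X into a fixed finite set. *)
Lemma translates_cap_empty y : ~ (forall n, Xn n y).
Proof.
move=> all; have [_ _ inA _] := sepA.
have [y0 nXy0] := infinite_setN0 (almost_eq_infinite (almost_eqC (almost_eq_sym XA)) inA).
have [W [fW hW]] := crossing_on_path (genS (y^-1 \* y0)) y.
have fQ := crossing_finite fS cX.
apply: (injective_not_finite gpow_inj (finite_image2 (fun a b => a \* b^-1) fW fQ)) => n.
have [p Wp] : exists2 p, W p & crossing S (Xn n) p.
  apply: hW; left; split; first exact: all.
  by rewrite gmulKVg => /Xn_sub.
rewrite crossing_lmul => Qp; exists p => //; exists ((gpow h n)^-1 \* p) => //.
by rewrite ginvM ginvK gmulKVg.
Qed.

(* Symmetrically, using paths from a point of X, some power of h moves every
   point into X. *)
Lemma translates_cover y : exists n, X (gpow h n \* y).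
Proof.
apply: contrapT => /forallNP nex; have [_ iA _ _] := sepA.
have [x0 Xx0] := infinite_setN0 (almost_eq_infinite (almost_eq_sym XA) iA).
have [W [fW hW]] := crossing_on_path (genS (x0^-1 \* y)) x0.
have fQ := crossing_finite fS cX.
have injV : injective (fun n => (gpow h n)^-1).
  by move=> m n e; apply: gpow_inj; rewrite -[gpow h m]ginvK e ginvK.
apply: (injective_not_finite injV (finite_image2 (fun a b => a \* b^-1) fW fQ)) => n.
have [p Wp] : exists2 p, W p & crossing S (lmul (gpow h n)^-1 X) p.
  apply: hW; left; split.
    by rewrite /lmul ginvK; apply: (@Xn_sub n); rewrite /Xn /lmul /= gmulKg.
  by rewrite gmulKVg /lmul ginvK; apply: nex.
rewrite crossing_lmul /lmul ginvK => Qp; exists p => //; exists (gpow h n \* p) => //.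
by rewrite ginvM gmulKVg.
Qed.

Lemma translates_decomposition y : exists a b d, [/\ X d, ~ lmul h X d &
  y = (gpow h a)^-1 \* gpow h b \* d].
Proof.
have [n0 Xz] := translates_cover y; set z := gpow h n0 \* y in Xz.
have exm : exists m, `[< ~ Xn m z >].
  apply: contrapT => /forallNP nex; apply: (translates_cap_empty (y := z)) => n.
  by apply: contrapT => nX; apply: (nex n); apply/asboolP.
case: (ex_minnP exm) => -[|m] /asboolP nXm minm.
  by exfalso; apply: nXm; rewrite /Xn /= lmul1.
have Xm : Xn m z.
  by apply: contrapT => /asboolP /minm; rewrite ltnn.
exists n0, m, ((gpow h m)^-1 \* z); split.
- by move: Xm; rewrite /Xn /lmul.
- by move: nXm; rewrite /Xn /= -gpow_comm lmulM /lmul.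
- by rewrite gmulA gmulgK /z gmulKg.
Qed.

End Decomposition.

Section FinitelyGenerated.
Variable G : group.
Variables (A S : set G).
Hypothesis sepA : separator A.
Hypothesis fS : finite_set S.
Hypothesis genS : forall x, generated S x.

Lemma strict_translate : exists h X, [/\ stab A h, almost_eq X A, clopen X,
  lmul h X `<=` X & X `\` lmul h X !=set0].
Proof.
have [X [XA Xmin]] := min_cut_exists A S.
have cX : clopen X by case: sepA => cA _ _ _; exact: clopen_almost_eq (almost_eq_sym XA) cA.
have [h [Hh QX Qout]] := good_translation sepA fS XA.
have [hXX hX_proper] := translate_inside sepA fS genS XA Xmin Hh QX Qout.
by exists h, X.
Qed.

(* The fundamental domain X \ hX is finite, so <h> has finite index; it is
   infinite since the powers of h are distinct. *)
Lemma virtually_cyclic : has_infinite_cyclic_finite_index G.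
Proof.
have [h [X [Hh XA cX hXX hX_proper]]] := strict_translate.
exists h; split.
  move=> fC; apply: (injective_not_finite (gpow_inj hXX hX_proper) fC) => n.
  by exists (Posz n).
pose D := X `\` lmul h X.
have fD : finite_set D.
  apply: (finite_cover XA.1 (stab_lmul Hh XA).2) => x [Xx nx].
  by have [Ax|nAx] := pselect (A x); [right|left].
exists ((fun d => d^-1) @` D); split; first exact: finite_image.
move=> x; have [a [b [d [Xd nd e]]]] :=
  translates_decomposition fS genS sepA XA cX hXX hX_proper x^-1.
exists d^-1; first by exists d.
exists ((gpow h b)^-1 \* gpow h a); first exact: gpow_cyclic.
by rewrite -(ginvK x) e !ginvM ginvK !gmulA.
Qed.

End FinitelyGenerated.

Section FinitelyGeneratedSubgroups.
Variable G : group.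
Implicit Types (B K T Y : set G) (c g r x y : G).

Definition generator_boundary T B : set G := \bigcup_(s in symm T) boundary s B.

Lemma generator_boundary_finite T B : finite_set T -> clopen B ->
  finite_set (generator_boundary T B).
Proof. by move=> fT cB; apply: bigcup_finite (symm_finite fT) _ => s _; apply: cB. Qed.

Lemma coset_meets_boundary T B x c1 c2 : generated T c1 -> generated T c2 ->
  B (x \* c1) -> ~ B (x \* c2) ->
  exists r c, [/\ generator_boundary T B r, generated T c & r = x \* c].
Proof.
move=> g1 g2 B1 nB2; apply: contrapT => nex.
pose K := [set y | B y /\ exists2 c, generated T c & y = x \* c].
have clK y s : K y -> symm T s -> K (y \* s).
  move=> [By [c gc ey]] Ts; split; last first.
    by exists (c \* s); [apply: generated_mul_symm|rewrite ey gmulA].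
  apply: contrapT => nB; apply: nex; exists y, c; split=> //.
  by exists s.
have gw : generated T (c1^-1 \* c2) by apply: gen_mul => //; apply: gen_inv.
have := (symm_closed_generated clK gw (conj B1 (ex_intro2 _ _ c1 g1 erefl))).1.
by rewrite gmulA gmulgK => -[].
Qed.

(* If every coset y <T> with y in K (a union of such cosets) meets the
   translate y^-1 Y only finitely, then K meets Y only finitely: each such
   point lies on one of finitely many cosets through the T-boundary of Y. *)
Lemma cosets_setI_finite T Y K : finite_set T -> clopen Y -> infinite_set (generated T) ->
  (forall y c, K y -> generated T c -> K (y \* c)) ->
  (forall r, K r -> finite_set (generated T `&` lmul r^-1 Y)) ->
  finite_set (Y `&` K).
Proof.
move=> fT cY iC clK finK.
pose P r := (fun c => r \* c) @` (generated T `&` lmul r^-1 Y).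
have fR := generator_boundary_finite fT cY.
apply: (sub_finite_set _ (bigcup_finite (F := P) (finite_setIl K fR) _)); last first.
  by move=> r [_ Kr]; apply: finite_image; apply: finK.
move=> y [Yy Ky].
have [c [Cc nYc]] : exists c, generated T c /\ ~ Y (y \* c).
  apply: contrapT => /forallNP nex; apply: iC; apply: (sub_finite_set _ (finK _ Ky)) => c Cc.
  split=> //; rewrite /lmul /= ginvK; apply: contrapT => nY; exact: (nex c (conj Cc nY)).
have Yy1 : Y (y \* \1) by rewrite gmulg1.
have [r [c' [Rr gc' er]]] := coset_meets_boundary (gen_one T) Cc Yy1 nYc.
exists r; first by split=> //; rewrite er; apply: clK.
exists c'^-1; last by rewrite er gmulgK.
by split; [apply: gen_inv|rewrite /lmul /= ginvK er gmulgK].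
Qed.

Variable A : set G.
Hypothesis sepA : separator A.

(* A coset x0 <T> of an infinite subgroup generated by finitely many
   elements of the almost stabilizer cannot lie inside a separator B with
   the same almost stabilizer: the translate x0^-1 B would be almost equal
   to that stabilizer, which is not clopen. *)
Lemma coset_inside_separator B T x0 : separator B -> stab B = stab A ->
  finite_set T -> T `<=` stab A -> infinite_set (generated T) ->
  (forall c, generated T c -> B (x0 \* c)) -> False.
Proof.
move=> sepB HB fT THs iC inB.
have CH : forall c, generated T c -> stab A c.
  by apply: generated_min => //; [exact: stab1|exact: stabM|exact: stabV].
pose A' := lmul x0^-1 B.
have [B' [sepB' HB' A'B']] : exists B', [/\ separator B', stab B' = stab A & almost_eq A' B'].
  case: (separator_lmul x0^-1 sepB) => e; [exists B|exists (~` B)]; split=> //.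
  - exact: separatorC.
  - by rewrite stabC.
have [cB' _ inB' _] := sepB'.
have cA' : clopen A' := clopen_almost_eq (almost_eq_sym A'B') cB'.
have lmulH g : stab A g -> almost_eq (lmul g A') A'.
  by move=> Hg; apply: almost_eq_trans (almost_eq_sym A'B'); apply: stab_lmul; rewrite ?HB'.
have lmulNH g : ~ stab A g -> almost_eq (lmul g A') (~` A').
  move=> Hg; apply: almost_eq_trans (almost_eqC (almost_eq_sym A'B')).
  by apply: (nstab_lmul sepB'); rewrite ?HB'.
have CA' c : generated T c -> A' c by move=> /inB; rewrite /A' /lmul /= ginvK.
have f1 : finite_set (~` A' `&` stab A).
  apply: cosets_setI_finite (clopenC cA') iC _ _ => //.
    by move=> y c Hy /CH Hc; apply: stabM.
  move=> r /stabV /lmulH [_ fr]; apply: (sub_finite_set _ fr) => c [/CA' A'c nA'c].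
  by split.
have f2 : finite_set (A' `&` ~` stab A).
  apply: cosets_setI_finite cA' iC _ _ => //.
    by move=> y c nHy /CH Hc; apply: stabNM.
  move=> r /stabVN /lmulNH [fr _]; apply: (sub_finite_set _ fr) => c [/CA' A'c A'rc].
  by split=> // /(_ A'c).
have inA' : infinite_set (~` A') := almost_eq_infinite (almost_eqC (almost_eq_sym A'B')) inB'.
apply: (stab_not_almost_clopen sepA cA' inA'); split=> //.
by apply: (sub_finite_set _ f1) => x [Hx nAx]; split.
Qed.

Hypothesis nfg : ~ finitely_generated G.

(* In a group that is not finitely generated, finitely many elements of the
   almost stabilizer generate a finite subgroup: otherwise some coset of it
   avoids the T-boundary of A, hence lies in A or in ~A, or else all cosets
   meet that boundary and G is generated by it together with T. *)
Lemma generated_stab_finite T : finite_set T -> T `<=` stab A -> finite_set (generated T).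
Proof.
move=> fT THs; apply: contrapT => iC; have [cA _ _ _] := sepA.
pose R := generator_boundary T A.
have [allc|/existsNP [x0 nx0]] :=
  pselect (forall x, exists r c, [/\ R r, generated T c & r = x \* c]).
  apply: nfg; exists (R `|` T); split.
    by rewrite finite_setU; split=> //; apply: generator_boundary_finite.
  move=> x; have [r [c [Rr gc er]]] := allc x.
  rewrite -(gmulgK c x) -er; apply: gen_mul; first by apply: gen_base; left.
  by apply: gen_inv; apply: (generated_sub (S := T)) => // y Ty; right.
have pure c : generated T c -> (A (x0 \* c) <-> A x0).
  move=> gc; split=> Ax; apply: contrapT => nA; apply: nx0.
    by apply: (coset_meets_boundary gc (gen_one T)); rewrite ?gmulg1.
  by apply: (coset_meets_boundary (gen_one T) gc); rewrite ?gmulg1.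
have [Ax0|nAx0] := pselect (A x0).
  by apply: (coset_inside_separator sepA erefl fT THs iC (x0 := x0)) => c /pure ->.
apply: (coset_inside_separator (separatorC sepA) (stabC A) fT THs iC (x0 := x0)).
by move=> c /pure e /e.
Qed.

End FinitelyGeneratedSubgroups.

Lemma finite_nat_bounded (D : set nat) : finite_set D -> exists N, forall i, D i -> (i < N)%N.
Proof.
move=> /finite_seqP [s ->]; elim: s => [|a s [N hN]]; first by exists 0.
exists (maxn a.+1 N) => i /=; rewrite inE => /orP [/eqP ->|si].
  by rewrite leq_max leqnn.
by rewrite leq_max (hN i si) orbT.
Qed.

Section Core.
Variable G : group.
Implicit Types (B T : set G) (k x : G).

Definition core B T : set G := [set x | forall k, generated T k -> B (k \* x)].

Lemma core_antimono B T1 T2 : T1 `<=` T2 -> core B T2 `<=` core B T1.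
Proof. by move=> sub x h k gk; apply: h; apply: generated_sub gk. Qed.

Lemma core_sub B T : core B T `<=` B.
Proof. by move=> x /(_ _ (gen_one T)); rewrite gmul1g. Qed.

Lemma core_lmul B T k x : generated T k -> core B T x -> core B T (k \* x).
Proof. by move=> gk h k' gk'; rewrite gmulA; apply: h; apply: gen_mul. Qed.

End Core.

Section NotFinitelyGenerated.
Variable G : group.
Implicit Types (B C T : set G) (k t x y : G).
Variable A : set G.
Hypothesis sepA : separator A.
Hypothesis nfg : ~ finitely_generated G.

(* Adding a suitable element of the almost stabilizer to a finite T strictly
   shrinks the core of B: the core is almost all of B since <T> is finite. *)
Lemma core_shrinks B T : separator B -> stab B = stab A -> finite_set T ->
  T `<=` stab A -> exists k, stab A k /\ exists x, core B T x /\ ~ B (k \* x).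
Proof.
move=> sepB HB fT TH; have [cB iB _ _] := sepB.
have fL := generated_stab_finite sepA nfg fT TH.
have LH : forall k, generated T k -> stab A k.
  by apply: generated_min => //; [exact: stab1|exact: stabM|exact: stabV].
have fD : finite_set (B `\` core B T).
  apply: (sub_finite_set _ (bigcup_finite (F := fun k => B `\` lmul k^-1 B) fL _)).
    move=> x [Bx nc]; apply: contrapT => nex; apply: nc => k gk.
    apply: contrapT => nB; apply: nex; exists k => //; split=> //.
    by rewrite /lmul /= ginvK.
  move=> k gk; have Hk : stab B k^-1 by rewrite HB; apply: stabV; apply: LH.
  exact: Hk.2.
have [x cx] : exists x, core B T x.
  apply: infinite_setN0 => fc; apply: iB; apply: (finite_cover fD fc) => x Bx.
  by have [h|h] := pselect (core B T x); [right|left].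
have iK : infinite_set ((~` B `&` stab A) `\` (~` B `\` rmul (~` B) x)).
  apply: infinite_setD; last exact: (rmul_almost_eq x (clopenC cB)).2.
  by rewrite -HB -(stabC B); apply: stab_setI_infinite; apply: separatorC.
have [k [[nBk Hk] nk]] := infinite_setN0 iK.
exists k; split=> //; exists x; split=> //.
by apply: contrapT => nn; apply: nk; split.
Qed.

Definition side n : set G := if (n %% 2 == 1)%N then ~` A else A.

Lemma side_separator n : separator (side n) /\ stab (side n) = stab A.
Proof. by rewrite /side; case: ifP => _; [split; [apply: separatorC|apply: stabC]|]. Qed.

(* A strictly increasing sequence of finite sets of elements of the almost
   stabilizer, each step shrinking the core of the current side. *)
Fixpoint gens n : set G :=
  if n is m.+1 then
    gens m `|` [set xget (\1 : {classic G})
      [set k | stab A k /\ exists x, core (side m) (gens m) x /\ ~ side m (k \* x)]]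
  else set0.

Lemma gens_finite_stab n : finite_set (gens n) /\ gens n `<=` stab A.
Proof.
elim: n => [|n [fT TH]] /=; first by split; [apply: finite_set0|].
have [sepB HB] := side_separator n.
have [Hk _] := xgetPex (\1 : {classic G}) (core_shrinks sepB HB fT TH).
by split; [rewrite finite_setU; split|move=> x [/TH|->]].
Qed.

Lemma gens_mono m n : (m <= n)%N -> gens m `<=` gens n.
Proof.
elim: n => [|n IH]; first by rewrite leqn0 => /eqP ->.
by rewrite leq_eqVlt => /orP [/eqP ->//|/IH sub] x /sub; left.
Qed.

Local Notation L n := (generated (gens n)).
Local Notation Linf := [set k | exists n, L n k].

Lemma L_finite n : finite_set (L n).
Proof. by have [fT TH] := gens_finite_stab n; exact: (generated_stab_finite sepA nfg fT TH). Qed.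

Lemma L_common k1 k2 : Linf k1 -> Linf k2 -> exists n, L n k1 /\ L n k2.
Proof.
move=> [n1 g1] [n2 g2]; exists (maxn n1 n2); split.
  by apply: (generated_sub (S := gens n1)) => //; apply: gens_mono; rewrite leq_maxl.
by apply: (generated_sub (S := gens n2)) => //; apply: gens_mono; rewrite leq_maxr.
Qed.

Lemma core_step n : exists x, core (side n) (gens n) x /\ ~ core (side n) (gens n.+1) x.
Proof.
have [sepB HB] := side_separator n; have [fT TH] := gens_finite_stab n.
have [_ [x [cx nB]]] := xgetPex (\1 : {classic G}) (core_shrinks sepB HB fT TH).
by exists x; split=> // /(_ _ (gen_base (or_intror erefl))).
Qed.

Section Layers.
Variable B : set G.
Hypothesis sepB : separator B.
Variable par : nat.
Hypothesis par_lt2 : (par < 2)%N.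
Hypothesis core_steps : forall n, (n %% 2 = par)%N ->
  exists x, core B (gens n) x /\ ~ core B (gens n.+1) x.
Hypothesis Linf_side : finite_set (B `&` Linf) \/ infinite_set (Linf `\` B).

Local Notation core' n := (core B (gens n)).

Definition layer n := core' n `\` core' n.+1.

Lemma core_decr m n : (m <= n)%N -> core' n `<=` core' m.
Proof. by move=> mn; apply: core_antimono; apply: gens_mono. Qed.

Lemma layer_uniq i j x : layer i x -> layer j x -> i = j.
Proof.
move=> [ci ni] [cj nj]; apply/eqP; rewrite eqn_leq; apply/andP; split.
  by apply: contraT; rewrite -ltnNge => lt; case: nj; apply: (core_decr lt) ci.
by apply: contraT; rewrite -ltnNge => lt; case: ni; apply: (core_decr lt) cj.
Qed.

Lemma layer_index_finite x : finite_set [set j | layer j x].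
Proof.
have [[j lj]|nex] := pselect (exists j, layer j x).
  by apply: (sub_finite_set _ (finite_set1 j)) => i li; apply: layer_uniq li lj.
by apply: (sub_finite_set _ (@finite_set0 nat)) => i li; apply: nex; exists i.
Qed.

Lemma layer_lmul j k x : L j k -> layer j x -> layer j (k \* x).
Proof.
move=> gk [cx ncx]; split; first exact: core_lmul.
move=> ckx; apply: ncx => k' gk'.
have := ckx (k' \* k^-1) _; rewrite -gmulA gmulKg; apply.
apply: gen_mul => //; apply: gen_inv; apply: (generated_sub (S := gens j)) => //.
exact: gens_mono.
Qed.

Lemma later_layer m y : core' m y -> ~ (forall n, core' n y) ->
  exists2 j, (m <= j)%N & layer j y.
Proof.
move=> cmy /existsNP ex.
have exm : exists n, `[< ~ core' n y >] by case: ex => n ?; exists n; apply/asboolP.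
case: (ex_minnP exm) => -[|j] /asboolP ncj minj.
  by case: ncj; apply: core_decr cmy.
have cj : core' j y by apply: contrapT => /asboolP /minj; rewrite ltnn.
exists j; last by split.
by rewrite leqNgt; apply/negP => lt; apply: ncj; apply: core_decr cmy.
Qed.

Definition exits s := [set y | exists j, layer j y /\ ~ core' j (y \* s)].

(* Such points are, up to the finite groups L j, points of the s-boundary
   of B, and each point lies in at most one layer. *)
Lemma exits_finite s : finite_set (exits s).
Proof.
have [cB _ _ _] := sepB.
pose F p := \bigcup_(j in [set j | layer j p]) ((fun k => k \* p) @` L j).
apply: (sub_finite_set _ (bigcup_finite (F := F) (cB s) _)); last first.
  move=> p _; apply: bigcup_finite; first exact: layer_index_finite.
  by move=> j _; apply: finite_image; apply: L_finite.
move=> y [j [lj ncj]].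
have [k gk nBk] : exists2 k, L j k & ~ B (k \* (y \* s)).
  by apply: contrapT => h; apply: ncj => k gk; apply: contrapT => nb; apply: h; exists k.
exists (k \* y); first by split; [exact: lj.1 k gk|rewrite -gmulA].
exists j; first exact: layer_lmul.
by exists k^-1; [apply: gen_inv|rewrite gmulKg].
Qed.

Definition core_all := [set x | forall n, core' n x].

(* Exits to points in all cores: by the hypothesis on the side B, there are
   finitely many of them. *)
Definition stable_exits t := [set x | B x /\ exists q k,
  [/\ boundary t^-1 B q, core_all q, Linf k & x = k \* (q \* t^-1)]].

Lemma stable_exits_finite t : finite_set (stable_exits t).
Proof.
have [cB _ _ _] := sepB.
case: Linf_side => [fBL|iLB].
  pose F q := (fun k => k \* (q \* t^-1)) @` (Linf `&` rmul B (q \* t^-1)).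
  apply: (sub_finite_set _ (bigcup_finite (F := F) (cB t^-1) _)).
    move=> x [Bx [q [k [bq _ Lk ex]]]]; exists q => //.
    by exists k => //; split=> //; rewrite /rmul /= -ex.
  move=> q _; apply: finite_image.
  apply: (finite_cover fBL (rmul_almost_eq (q \* t^-1) cB).1) => k [Lk Bk].
  by have [b|b] := pselect (B k); [left|right].
apply: (sub_finite_set _ (@finite_set0 G)) => x [_ [q [k [_ cq _ _]]]].
apply: iLB; apply: (sub_finite_set _ (rmul_almost_eq q cB).1) => k' [[n gk'] nB].
by split=> //; exact: cq n k' gk'.
Qed.

Lemma layer_to_core_all i x t : layer i x -> core_all (x \* t) -> stable_exits t x.
Proof.
move=> [ci nci] cxt.
have [k gk nBk] : exists2 k, L i.+1 k & ~ B (k \* x).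
  by apply: contrapT => h; apply: nci => k gk; apply: contrapT => nb; apply: h; exists k.
split; first exact: core_sub ci.
exists (k \* (x \* t)), k^-1; split.
- by split; [exact: cxt i.+1 k gk|rewrite !gmulA gmulgK].
- move=> n k' gk'; have [m [g1 g2]] := L_common (ex_intro _ n gk') (ex_intro _ i.+1 gk).
  by rewrite gmulA; apply: (cxt m); apply: gen_mul.
- by exists i.+1; apply: gen_inv.
- by rewrite gmulA gmulKg gmulgK.
Qed.

Definition half_layers := [set x | exists2 i, (2 <= i %% 4)%N & layer i x].

(* A point of half_layers whose t-neighbour is outside is an exit, the
   t^-1-exit of its neighbour, or a stable exit. *)
Lemma half_layers_clopen : clopen half_layers.
Proof.
move=> t; have fE : finite_set (exits t `|` (fun y => y \* t^-1) @` exits t^-1).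
  by rewrite finite_setU; split; [exact: exits_finite|exact: finite_image (exits_finite _)].
apply: (finite_cover fE (stable_exits_finite t)).
move=> x [[i Ii [ci nci]] nC].
have [cit|ncit] := pselect (core' i (x \* t)); last by left; left; exists i.
have ci1 : core' i.+1 (x \* t) by apply: contrapT => nc; apply: nC; exists i => //; split.
have [call|ncall] := pselect (core_all (x \* t)).
  by right; apply: (@layer_to_core_all i x t (conj ci nci) call).
have [j lt lj] := later_layer ci1 ncall.
left; right; exists (x \* t); last by rewrite gmulgK.
exists j; split=> //; rewrite gmulgK => cjx; apply: nci; exact: core_decr cjx.
Qed.

(* Infinitely many nonempty layers from a family of indices give an
   infinite union, as each point lies in a single layer. *)
Lemma layers_union_infinite (J : nat -> Prop) :
  (forall N, exists2 i, (N <= i)%N & J i /\ exists x, layer i x) ->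
  infinite_set [set x | exists2 i, J i & layer i x].
Proof.
move=> cof fU.
have fIdx : finite_set [set i | exists x, (exists2 i, J i & layer i x) /\ layer i x].
  apply: (sub_finite_set _ (bigcup_finite (F := fun x => [set j | layer j x]) fU _)).
    by move=> i [x [Ux lx]]; exists x.
  by move=> x _; apply: layer_index_finite.
have [N hN] := finite_nat_bounded fIdx.
have [i Ni [Ji [x lx]]] := cof N.
have := hN i (ex_intro _ x (conj (ex_intro2 _ _ i Ji lx) lx)).
by rewrite ltnNge Ni.
Qed.

(* half_layers splits B into two infinite clopen parts, which a separator
   does not allow. *)
Lemma layers_contradiction : False.
Proof.
have [cB iB inB dB] := sepB.
have CB : half_layers `<=` B by move=> x [i _ [cx _]]; apply: core_sub cx.
have iC : infinite_set half_layers.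
  apply: layers_union_infinite => N.
  have [x hx] := core_steps (n := 4 * N + 2 + par) ltac:(lia).
  by exists (4 * N + 2 + par)%N; [lia|split; [lia|exists x]].
have iD : infinite_set (B `\` half_layers).
  move=> f; apply: (@layers_union_infinite (fun i => ~ (2 <= i %% 4)%N)).
    move=> N; have [x hx] := core_steps (n := 4 * N + par) ltac:(lia).
    by exists (4 * N + par)%N; [lia|split; [lia|exists x]].
  apply: (sub_finite_set _ f) => x [i nIi li]; split; first exact: core_sub li.1.
  by move=> [j Ij lj]; apply: nIi; rewrite (layer_uniq li lj).
have [[f|f] _] := dB _ half_layers_clopen.
  by apply: iC; apply: (sub_finite_set _ f) => x Cx; split=> //; apply: CB.
by apply: iD.
Qed.

End Layers.

(* Use the side on which the union of the L n is large. *)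
Lemma not_finitely_generated_false : False.
Proof.
have [iLA|/contrapT fLA] := pselect (infinite_set (Linf `\` A)).
  apply: (@layers_contradiction A sepA 0) => [//|n hn|]; last by right.
  by have := core_step n; rewrite /side hn.
apply: (@layers_contradiction (~` A) (separatorC sepA) 1) => [//|n hn|].
  by have := core_step n; rewrite /side hn.
by left; apply: (sub_finite_set _ fLA) => x [nAx Lx].
Qed.

End NotFinitelyGenerated.

Theorem theorem9p16 (G : group) :
  has_exactly_two_ends G ->
  finitely_generated G /\ has_infinite_cyclic_finite_index G.
Proof.
move=> two; have [A sepA] := two_ends_separator two.
have [fg|nfg] := pselect (finitely_generated G).
  by split=> //; have [S [fS genS]] := fg; exact: virtually_cyclic sepA fS genS.
by exfalso; exact: not_finitely_generated_false sepA nfg.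
Qed.
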